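(* A function $f\colon\prod_{i\in[n]}X_i\to Y$ is a pseudo-polynomial function if and only if it is pseudo-median decomposable.
   Context: $Y$ is a finite distributive lattice with least element $0$ and greatest element $1$. $[n]=\{1,\ldots,n\}$. $X_1,\ldots,X_n$ are arbitrary sets with at least two elements; in each $X_k$ two distinct elements $0_{X_k},1_{X_k}$ (written $0,1$) are fixed. A map $\varphi_k\colon X_k\to Y$ satisfies the boundary condition if $\varphi_k(0_{X_k})\le\varphi_k(x_k)\le\varphi_k(1_{X_k})$ for all $x_k\in X_k$. A polynomial function $p\colon Y^n\to Y$ is a function obtained by composing the lattice operations $\wedge,\vee$ with variables and constants of $Y$. $f$ is a pseudo-polynomial function if there exist a polynomial function $p\colon Y^n\to Y$ and maps $\varphi_k\colon X_k\to Y$ satisfying the boundary condition with $f(\mathbf{x})=p(\varphi_1(x_1),\ldots,\varphi_n(x_n))$ for all $\mathbf{x}$. For $\mathbf{x}$ and $a\in X_k$, $\mathbf{x}_k^a$ is $\mathbf{x}$ with its $k$-th component replaced by $a$. $\operatorname{med}(y_1,y_2,y_3)=(y_1\wedge y_2)\vee(y_2\wedge y_3)\vee(y_3\wedge y_1)$. $f$ is pseudo-median decomposable if for each $k\in[n]$ there is a map $\varphi_k\colon X_k\to Y$ satisfying the boundary condition such that $f(\mathbf{x})=\operatorname{med}\big(f(\mathbf{x}_k^0),\varphi_k(x_k),f(\mathbf{x}_k^1)\big)$ for every $\mathbf{x}\in\prod_{i\in[n]}X_i$. *)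

From HB Require Import structures.
From mathcomp Require Import all_boot all_order.
Set Implicit Arguments. Unset Strict Implicit. Unset Printing Implicit Defensive.
Import Order.Theory.
Local Open Scope order_scope.

Inductive lpoly (Y : Type) (n : nat) : Type :=
  | LVar of 'I_n
  | LCst of Y
  | LMeet of lpoly Y n & lpoly Y n
  | LJoin of lpoly Y n & lpoly Y n.

Section Defs.
Context {d : Order.disp_t} {Y : finTBDistrLatticeType d} {n : nat}.

Fixpoint lpeval (t : lpoly Y n) (y : 'I_n -> Y) : Y :=
  match t with
  | LVar i => y i
  | LCst c => c
  | LMeet t1 t2 => lpeval t1 y `&` lpeval t2 y
  | LJoin t1 t2 => lpeval t1 y `|` lpeval t2 y
  end.

Definition is_polynomial_function (p : ('I_n -> Y) -> Y) : Prop :=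
  exists t : lpoly Y n, forall y, p y = lpeval t y.

Definition med (y1 y2 y3 : Y) : Y :=
  (y1 `&` y2) `|` (y2 `&` y3) `|` (y3 `&` y1).

Variables (X : 'I_n -> Type) (x0 x1 : forall k, X k).

Definition boundary_cond (k : 'I_n) (phi : X k -> Y) : Prop :=
  forall a : X k, phi (x0 k) <= phi a <= phi (x1 k).

Definition pseudo_polynomial (f : (forall k, X k) -> Y) : Prop :=
  exists (p : ('I_n -> Y) -> Y) (phi : forall k, X k -> Y),
    is_polynomial_function p /\ (forall k, boundary_cond (phi k)) /\
    forall x : forall k, X k, f x = p (fun i => phi i (x i)).

Definition upd (x : forall k, X k) (k : 'I_n) (a : X k) : forall i, X i :=
  dfwith x a.

Definition pseudo_median_decomposable (f : (forall k, X k) -> Y) : Prop :=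
  forall k : 'I_n, exists phi : X k -> Y, boundary_cond phi /\
    forall x : forall i, X i,
      f x = med (f (upd x (x0 k))) (phi (x k)) (f (upd x (x1 k))).
End Defs.

From HB Require Import structures.
From mathcomp Require Import all_boot all_order.
From Stdlib Require Import FunctionalExtensionality ClassicalEpsilon.
Set Implicit Arguments. Unset Strict Implicit. Unset Printing Implicit Defensive.
Import Order.Theory.
Local Open Scope order_scope.

(* (=>) The key fact is a median property of lattice polynomials in one
   variable: if only the k-th argument of a polynomial p varies, and it varies
   through an element c with a <= c <= b, then
       p(y_k^c) = p(y_k^a) \/ (c /\ p(y_k^b)) = med (p(y_k^a), c, p(y_k^b)).
   It holds because elements of the form A \/ (c /\ B) with A <= B are closed
   under meet and join.  Applied to f = p o (phi_1, ..., phi_n) and the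
   boundary condition phi_k(0) <= phi_k(x_k) <= phi_k(1), it gives the
   decomposition of f in its k-th argument with the map phi_k.

   (<=) Choose decomposing maps phi_k.  Unfolding the median decomposition of f
   successively in every coordinate yields a lattice polynomial (a binary tree
   of medians whose leaves are constant values of f) which represents f after
   composition with the phi_k. *)

Ltac lattice_le n := match n with 0 => fail | S ?m =>
  rewrite ?leUx ?lexI; repeat (apply/andP; split);
  first [exact: lexx | assumption
        | (apply: leIxl; lattice_le m) | (apply: leIxr; lattice_le m)
        | (apply: lexUl; lattice_le m) | (apply: lexUr; lattice_le m)] end.

Section MedianForm.
Context {d : Order.disp_t} {L : distrLatticeType d}.
Implicit Types (A B c : L).

Lemma meet_median_form A1 A2 B1 B2 c : A1 <= B1 -> A2 <= B2 ->
  (A1 `|` (c `&` B1)) `&` (A2 `|` (c `&` B2)) = (A1 `&` A2) `|` (c `&` (B1 `&` B2)).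
Proof.
move=> AB1 AB2; apply: le_anti; apply/andP; split; last by lattice_le 6.
rewrite meetUl !meetUr; lattice_le 6.
Qed.

Lemma join_median_form A1 A2 B1 B2 c :
  (A1 `|` (c `&` B1)) `|` (A2 `|` (c `&` B2)) = (A1 `|` A2) `|` (c `&` (B1 `|` B2)).
Proof. by rewrite joinACA meetUr. Qed.

End MedianForm.

Section PolynomialMedian.
Context {d : Order.disp_t} {Y : finTBDistrLatticeType d} {n : nat}.
Implicit Types (t : lpoly Y n) (y z : 'I_n -> Y).

Lemma med_le (A B c : Y) : A <= B -> med A c B = A `|` (c `&` B).
Proof. by move=> AB; apply: le_anti; rewrite /med; apply/andP; split; lattice_le 6. Qed.

Definition subst_at y (k : 'I_n) (c : Y) : 'I_n -> Y :=
  fun i => if i == k then c else y i.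

Lemma lpeval_mono t y z : (forall i, y i <= z i) -> lpeval t y <= lpeval t z.
Proof.
move=> yz; elim: t => [i|c|t1 IH1 t2 IH2|t1 IH1 t2 IH2] //=.
- exact: leI2.
- exact: leU2.
Qed.

Lemma lpeval_subst_mono t y k a b : a <= b ->
  lpeval t (subst_at y k a) <= lpeval t (subst_at y k b).
Proof. by move=> ab; apply: lpeval_mono => i; rewrite /subst_at; case: eqP. Qed.

Lemma lpeval_subst_median t y k a b c : a <= c <= b ->
  lpeval t (subst_at y k c) =
    med (lpeval t (subst_at y k a)) c (lpeval t (subst_at y k b)).
Proof.
case/andP=> ac cb; have ab := le_trans ac cb.
rewrite med_le ?lpeval_subst_mono //.
elim: t => [i|e|t1 IH1 t2 IH2|t1 IH1 t2 IH2] /=.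
- rewrite /subst_at; case: eqP => _; first by rewrite (meet_l cb) (join_r ac).
  by rewrite meetC meetKU.
- by rewrite meetC meetKU.
- by rewrite IH1 IH2 meet_median_form ?lpeval_subst_mono.
- by rewrite IH1 IH2 join_median_form.
Qed.

End PolynomialMedian.

Section PseudoPolynomial.
Context {d : Order.disp_t} {Y : finTBDistrLatticeType d} {n : nat}.
Variables (X : 'I_n -> Type) (x0 x1 : forall k, X k) (f : (forall k, X k) -> Y).

Lemma map_upd (phi : forall k, X k -> Y) (x : forall k, X k) k (a : X k) :
  (fun i => phi i (upd x a i)) = subst_at (fun i => phi i (x i)) k (phi k a).
Proof.
apply: functional_extensionality => i; rewrite /subst_at /upd.
by case: dfwithP => [|j kj]; rewrite ?eqxx // eq_sym (negbTE kj).
Qed.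

Lemma pseudo_polynomial_decomposable :
  pseudo_polynomial x0 x1 f -> pseudo_median_decomposable x0 x1 f.
Proof.
move=> [p [phi [[t pt] [bphi fp]]]] k; exists (phi k); split=> [//|x].
have y_subst : (fun i => phi i (x i)) = subst_at (fun i => phi i (x i)) k (phi k (x k)).
  by apply: functional_extensionality => i; rewrite /subst_at; case: eqP => [->|].
by rewrite !fp !pt !map_upd {1}y_subst; apply/lpeval_subst_median/bphi.
Qed.

(* The polynomial obtained by expanding f, at the point x, through the median
   decomposition in the coordinates ks (in order): the variable k stands for
   phi_k(x_k), and the leaves are the values of f at the corners reached. *)
Fixpoint median_expansion (ks : seq 'I_n) (x : forall k, X k) : lpoly Y n :=
  match ks with
  | [::] => LCst n (f x)
  | k :: ks' =>
    let A := median_expansion ks' (upd x (x0 k)) in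
    let B := median_expansion ks' (upd x (x1 k)) in
    LJoin (LJoin (LMeet A (LVar Y k)) (LMeet (LVar Y k) B)) (LMeet B A)
  end.

Lemma median_expansion_spec (phi : forall k, X k -> Y)
    (f_med : forall k x, f x = med (f (upd x (x0 k))) (phi k (x k)) (f (upd x (x1 k))))
    ks : uniq ks ->
  forall x x', (forall i, i \notin ks -> x' i = x i) ->
  forall y, (forall i, i \in ks -> y i = phi i (x' i)) ->
  f x' = lpeval (median_expansion ks x) y.
Proof.
elim: ks => [|k ks IH] /= => [_ x x' x'x y _|/andP [kNks uks] x x' x'x y yx'].
  by congr f; apply: functional_extensionality_dep => i; exact: x'x.
have agree_out (a : X k) i : i \notin ks -> upd x' a i = upd x a i.
  move=> iNks; rewrite /upd; case: (eqVneq k i) => [<-|ki]; first by rewrite !dfwith_in.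
  by rewrite !dfwith_out // x'x // in_cons negb_or iNks eq_sym ki.
have agree_in (a : X k) i : i \in ks -> y i = phi i (upd x' a i).
  move=> iks; rewrite yx' ?in_cons ?iks ?orbT // /upd dfwith_out //.
  by apply: contraNneq kNks => ->.
rewrite (f_med k x') /med (yx' k (mem_head _ _)).
by rewrite -(IH uks _ _ (agree_out _) y (agree_in _)) -(IH uks _ _ (agree_out _) y (agree_in _)).
Qed.

Lemma decomposable_pseudo_polynomial :
  pseudo_median_decomposable x0 x1 f -> pseudo_polynomial x0 x1 f.
Proof.
move=> fdec.
pose phi k := proj1_sig (constructive_indefinite_description _ (fdec k)).
have phiP k : boundary_cond x0 x1 (phi k) /\
    forall x, f x = med (f (upd x (x0 k))) (phi k (x k)) (f (upd x (x1 k))).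
  exact: proj2_sig (constructive_indefinite_description _ (fdec k)).
exists (lpeval (median_expansion (enum 'I_n) x0)), phi.
split; first by eexists.
split=> [k|x]; first by case: (phiP k).
apply: (median_expansion_spec (phi := phi)) => //.
- by move=> k; case: (phiP k).
- exact: enum_uniq.
- by move=> i; rewrite mem_enum.
Qed.

End PseudoPolynomial.

(* The distinctness hypothesis hx01 is part of the setting but not needed. *)
Theorem mainTheorem2 (d : Order.disp_t) (Y : finTBDistrLatticeType d) (n : nat)
  (X : 'I_n -> Type) (x0 x1 : forall k, X k) (hx01 : forall k, x0 k <> x1 k)
  (f : (forall k, X k) -> Y) :
  pseudo_polynomial x0 x1 f <-> pseudo_median_decomposable x0 x1 f.
Proof.
split; [exact: pseudo_polynomial_decomposable | exact: decomposable_pseudo_polynomial].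
Qed.
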